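(* Let $N\ge1$, real $\delta,\varepsilon>0$, and arbitrary real $r_i,c_i,c'_i$ ($1\le i\le N$). For integers $l,m,n$ put $\eta_i(l,m,n)=\max(0,r_i-\delta)l-\max(0,-r_i-\varepsilon)m+r_in+c_i$, $\eta'_i(l,m,n)=\max(0,-r_i-\delta)l-\max(0,r_i-\varepsilon)m-r_in+c'_i$, $\phi_i(l,m,n)=\max(\eta_i(l,m,n),\eta'_i(l,m,n))$ and $\tau(l,m,n)=\max[\phi_i(l,m,n+j-1)]_{1\le i,j\le N}$. Then $\tau$ satisfies the ultradiscrete two-dimensional Toda lattice equation \[ \tau(l,m-1,n)+\tau(l+1,m,n)=\max\bigl(\tau(l,m,n)+\tau(l+1,m-1,n),\ \tau(l,m-1,n+1)+\tau(l+1,m,n-1)-\delta-\varepsilon\bigr) \] for all integers $l,m,n$.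
   Context: Ultradiscrete permanent (UP): for a real $N\times N$ matrix $A=(a_{ij})$, $\max[a_{ij}]_{1\le i,j\le N}\equiv\max_{\pi}\sum_{i=1}^N a_{i\pi(i)}$ over all permutations $\pi$ of $\{1,\dots,N\}$. *)

From mathcomp Require Import all_boot all_order all_algebra all_fingroup.
Set Implicit Arguments. Unset Strict Implicit. Unset Printing Implicit Defensive.
Import Order.TTheory GRing.Theory Num.Theory.
Local Open Scope ring_scope.

(* Ultradiscrete permanent: max over permutations s of 'S_N of sum_i a i (s i).
   The big max is seeded with the value at the identity permutation (which is
   one of the terms), so the result is exactly the maximum over all perms. *)
Definition upsum (R : realDomainType) (N : nat) (a : 'I_N -> 'I_N -> R)
  (s : 'S_N) : R := \sum_(i < N) a i (s i).

Definition UP (R : realDomainType) (N : nat) (a : 'I_N -> 'I_N -> R) : R :=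
  \big[Num.max/upsum a 1%g]_(s : 'S_N) upsum a s.

Definition eta_ (R : realDomainType) (delta eps ri ci : R) (l m n : int) : R :=
  Num.max 0 (ri - delta) * l%:~R - Num.max 0 (- ri - eps) * m%:~R
  + ri * n%:~R + ci.

Definition eta' (R : realDomainType) (delta eps ri ci' : R) (l m n : int) : R :=
  Num.max 0 (- ri - delta) * l%:~R - Num.max 0 (ri - eps) * m%:~R
  - ri * n%:~R + ci'.

Definition phi (R : realDomainType) (delta eps ri ci ci' : R) (l m n : int) : R :=
  Num.max (eta_ delta eps ri ci l m n) (eta' delta eps ri ci' l m n).

(* tau(l,m,n) = max[phi_i(l,m,n+j-1)]_{1<=i,j<=N}; with 0-based j this is n + j *)
Definition tau (R : realDomainType) (N : nat) (delta eps : R)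
  (r c c' : 'I_N -> R) (l m n : int) : R :=
  UP (fun i j : 'I_N => phi delta eps (r i) (c i) (c' i) l m (n + (j : nat)%:Z)).

From mathcomp Require Import all_boot all_order all_algebra all_fingroup.
From mathcomp Require Import zify ring lra.
Import Order.TTheory GRing.Theory Num.Theory.
Set Implicit Arguments. Unset Strict Implicit. Unset Printing Implicit Defensive.
Local Open Scope ring_scope.

(* Expanding each [phi] into its two affine branches, and the sum over the
   permutation by the rearrangement inequality, writes [tau] as a maximum over
   branch choices [f] of an explicit function, so each side of the equation is a
   maximum over pairs [(s, t)] of choices.  Exchanging [s i] and [t i] where the
   two differ keeps a common part and changes only a quadratic form in the signs
   [z] of the exchanged slopes [+- |r i|]; the equation reduces to
   [min_z PX = min (min_z PY) (min_z PZ + delta + eps)] for three such forms.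
   Sorting the support by [|r i|] and summing by parts turns each form into a sum
   of quadratics in the signed suffix counts [D].  The alternating signs, with
   every [D] in [{0, -1}], minimize all terms at once, which gives
   [min PX <= PY] and [min PX <= PZ + delta + eps].  Equality comes from [PY]
   itself when all [|r i|] lie below [delta] or all below [eps], and otherwise
   from [PZ] at the alternating signs with the largest [|r i|] flipped, which
   shifts every [D] by [2]. *)

Section FiniteMaxima.
Variable R : realDomainType.

Definition ismax (T : Type) (f : T -> R) (x : R) :=
  (forall t, f t <= x) /\ exists t, x = f t.

Lemma eq_ismax (T : Type) (f g : T -> R) x : f =1 g -> ismax f x -> ismax g x.
Proof.
move=> fg [f_le [t xE]]; split=> [u|]; first by rewrite -fg.
by exists t; rewrite -fg.
Qed.

Lemma ismax_addl (T : Type) (f : T -> R) x a :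
  ismax f x -> ismax (fun t => a + f t) (a + x).
Proof.
move=> [f_le [t xE]]; split=> [u|]; first by rewrite lerD2l.
by exists t; rewrite xE.
Qed.

Lemma ismax_addr (T : Type) (f : T -> R) x a :
  ismax f x -> ismax (fun t => f t + a) (x + a).
Proof.
move=> [f_le [t xE]]; split=> [u|]; first by rewrite lerD2r.
by exists t; rewrite xE.
Qed.

Lemma ismax_add (T U : Type) (f : T -> R) (g : U -> R) x y :
  ismax f x -> ismax g y -> ismax (fun p : T * U => f p.1 + g p.2) (x + y).
Proof.
move=> [f_le [t xE]] [g_le [u yE]]; split=> [[a b]|]; first exact: lerD.
by exists (t, u); rewrite xE yE.
Qed.

Lemma ismax_prod (T U : Type) (h : T -> U -> R) (g : T -> R) x :
  (forall t, ismax (h t) (g t)) -> ismax g x -> ismax (fun p => h p.1 p.2) x.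
Proof.
move=> max_h [g_le [t xE]]; split=> [[a b]|].
  by have [h_le _] := max_h a; exact: le_trans (h_le b) (g_le a).
by have [_ [u gE]] := max_h t; exists (t, u); rewrite xE gE.
Qed.

Lemma ismax_prod_inv (T U : Type) (h : T -> U -> R) (g : U -> R) x :
  (forall u, ismax (h ^~ u) (g u)) -> ismax (fun p => h p.1 p.2) x -> ismax g x.
Proof.
move=> max_h [h_le [[t u] xE]]; split=> [v|].
  by have [_ [t' ->]] := max_h v; exact: (h_le (t', v)).
have [hu_le [t' gE]] := max_h u; have := h_le (t', u); rewrite xE /= => le_t'.
by exists u; apply/le_anti; rewrite hu_le gE le_t'.
Qed.

Lemma ismax_sum_max N (A B : 'I_N -> R) :
  ismax (fun f : {ffun 'I_N -> bool} => \sum_i (if f i then A i else B i))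
        (\sum_i Num.max (A i) (B i)).
Proof.
split=> [f|]; first by apply: ler_sum => i _; case: (f i); rewrite le_max lexx ?orbT.
exists [ffun i => B i <= A i]; apply: eq_bigr => i _; rewrite ffunE.
by case: lerP => [/max_idPl|/ltW/max_idPr].
Qed.

Lemma ismax_UP N (a : 'I_N -> 'I_N -> R) : ismax (upsum a) (UP a).
Proof.
split=> [s|]; first by rewrite /UP (bigD1 s) //= le_max lexx.
rewrite /UP; apply: (big_ind (fun x => exists s, x = upsum a s)) => [|x y [s ->] [t ->]|s _].
- by exists 1%g.
- by case: (leP (upsum a s) (upsum a t)) => _; [exists t | exists s].
- by exists s.
Qed.

Definition ismin (T : Type) (f : T -> R) (x : R) :=
  (forall t, x <= f t) /\ exists t, x = f t.

(* On each fibre [flip p] the three functions differ from the common [Rst p] only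
   by their penalties, so equal minimal penalties give equal maxima. *)
Lemma ismax_balance (T S : Type) (X Y Z Rst : T -> R) (PX PY PZ : T -> S -> R)
    (flip : T -> S -> T) (sgn : T -> S) x y z :
  (forall p, flip p (sgn p) = p) ->
  (forall p u, X (flip p u) = Rst p - PX p u) ->
  (forall p u, Y (flip p u) = Rst p - PY p u) ->
  (forall p u, Z (flip p u) = Rst p - PZ p u) ->
  (forall p, exists v, ismin (PX p) v /\ ismin (fun u => Num.min (PY p u) (PZ p u)) v) ->
  ismax X x -> ismax Y y -> ismax Z z -> x = Num.max y z.
Proof.
move=> flip_sgn Xflip Yflip Zflip balance [X_le [p xE]] [Y_le [q yE]] [Z_le [o zE]].
apply/le_anti/andP; split.
  have [v [[PX_ge [u0 vE]] [_ [u1 vE']]]] := balance p.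
  have le_xv : x <= Rst p - v by rewrite xE -{1}(flip_sgn p) Xflip lerD2l lerN2.
  rewrite le_max; case: (leP (PY p u1) (PZ p u1)) vE' => _ vE'; apply/orP;
    [left | right]; apply: le_trans le_xv _.
  - by rewrite vE' -Yflip Y_le.
  - by rewrite vE' -Zflip Z_le.
rewrite ge_max; apply/andP; split.
  have [v [[_ [u0 vE]] [PYZ_ge _]]] := balance q.
  have := PYZ_ge (sgn q); rewrite le_min => /andP[le_vY _].
  by rewrite yE -{1}(flip_sgn q) Yflip (le_trans _ (X_le (flip q u0))) // Xflip -vE lerD2l lerN2.
have [v [[_ [u0 vE]] [PYZ_ge _]]] := balance o.
have := PYZ_ge (sgn o); rewrite le_min => /andP[_ le_vZ].
by rewrite zE -{1}(flip_sgn o) Zflip (le_trans _ (X_le (flip o u0))) // Xflip -vE lerD2l lerN2.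
Qed.

End FiniteMaxima.

Section Rearrangement.
Variables (R : realFieldType) (N : nat).
Implicit Types (w : 'I_N -> R) (s : 'S_N).

Definition rearr w := \sum_i (\sum_j Num.max (w i) (w j) - w i) / 2.

Lemma sum_symmetrize (F : 'I_N -> 'I_N -> R) :
  \sum_i \sum_j F i j = \sum_i \sum_j (F i j + F j i) / 2.
Proof.
rewrite [RHS](eq_bigr (fun i => (\sum_j F i j + \sum_j F j i) / 2)); last first.
  by move=> i _; rewrite -mulr_suml big_split.
rewrite -mulr_suml big_split /=; set S := (X in X = _).
rewrite [X in _ + X]exchange_big -/S; lra.
Qed.

Lemma rearrE w :
  rearr w = \sum_i \sum_j (Num.max (w i) (w j) - (if j == i then w i else 0)) / 2.
Proof.
apply: eq_bigr => i _; rewrite -mulr_suml sumrB.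
by rewrite -big_mkcond /= big_pred1_eq.
Qed.

Lemma sum_count_sym (lt : rel 'I_N) w :
  \sum_i w i * #|[pred j | lt j i]|%:R =
  \sum_i \sum_j ((if lt j i then w i else 0) + (if lt i j then w j else 0)) / 2.
Proof.
rewrite -(sum_symmetrize (fun i j => if lt j i then w i else 0)).
apply: eq_bigr => i _; rewrite -sum1_card natr_sum mulr_sumr big_mkcond /=.
by apply: eq_bigr => j _; rewrite inE; case: (lt j i); rewrite ?mulr1 ?mulr0.
Qed.

Section StrictTotal.
Variable lt : rel 'I_N.
Hypothesis lt_irr : irreflexive lt.
Hypothesis lt_total : forall i j, i != j -> lt i j = ~~ lt j i.

Lemma sum_count_le_rearr w : \sum_i w i * #|[pred j | lt j i]|%:R <= rearr w.
Proof.
rewrite sum_count_sym rearrE; apply: ler_sum => i _; apply: ler_sum => j _.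
rewrite ler_pM2r ?invr_gt0 ?ltr0n //; case: eqVneq => [->|ne_ji].
  by rewrite lt_irr maxxx subrr addr0.
rewrite eq_sym in ne_ji; rewrite subr0 (lt_total ne_ji); case: (lt j i) => /=.
  by rewrite addr0 le_max lexx.
by rewrite add0r le_max lexx orbT.
Qed.

Lemma sum_count_rearr w : (forall i j, lt j i -> w j <= w i) ->
  \sum_i w i * #|[pred j | lt j i]|%:R = rearr w.
Proof.
move=> lt_mono; rewrite sum_count_sym rearrE; apply: eq_bigr => i _.
apply: eq_bigr => j _; congr (_ / 2); case: eqVneq => [->|ne_ji].
  by rewrite lt_irr maxxx subrr addr0.
rewrite eq_sym in ne_ji; rewrite subr0 (lt_total ne_ji); case lt_ji: (lt j i) => /=.
  by rewrite addr0 (max_idPl (lt_mono _ _ lt_ji)).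
by rewrite add0r (max_idPr (lt_mono _ _ _)) // lt_total ?lt_ji // eq_sym.
Qed.

End StrictTotal.

Lemma card_ord_lt (m : nat) : (m <= N)%N -> #|[pred k : 'I_N | (k < m)%N]| = m.
Proof.
move=> le_mN; have widen_inj : injective (widen_ord le_mN).
  by move=> j k /(congr1 val) /= /val_inj.
rewrite -[RHS](card_ord m) -(card_codom widen_inj).
apply: eq_card => k; apply/idP/codomP => [lt_km|[j ->]]; last by rewrite inE /= ltn_ord.
by exists (Ordinal lt_km); apply: val_inj.
Qed.

Lemma card_perm_lt s i : #|[pred j | (s j < s i)%N]| = s i.
Proof.
rewrite -[RHS](@card_ord_lt (s i)) ?(ltnW (ltn_ord (s i))) //.
rewrite -[RHS](card_image (@perm_inj _ s^-1%g)); apply: eq_card => j.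
apply/idP/imageP => [lt_ji | [k lt_k ->]]; last by rewrite inE permKV.
by exists (s j); rewrite ?inE ?permK.
Qed.

Lemma sum_perm_le_rearr w s : \sum_i w i * (s i)%:R <= rearr w.
Proof.
under eq_bigr => i _ do rewrite -card_perm_lt.
apply: (@sum_count_le_rearr (fun j i => s j < s i)%N) => [i|i j ne_ij]; first exact: ltnn.
by rewrite -leqNgt [RHS]leq_eqVlt -[_ == _]/(s i == s j) (inj_eq perm_inj) (negbTE ne_ij).
Qed.

Definition wlt w : rel 'I_N := fun j i => (w j < w i) || ((w j == w i) && (j < i)%N).

Lemma wlt_irr w : irreflexive (wlt w).
Proof. by move=> i; rewrite /wlt ltxx ltnn andbF. Qed.

Lemma wlt_trans w : transitive (wlt w).
Proof.
move=> b a c; rewrite /wlt => /orP[lt_ab|/andP[/eqP-> lt_ab]] /orP[lt_bc|/andP[/eqP<- lt_bc]].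
- by rewrite (lt_trans lt_ab lt_bc).
- by rewrite lt_ab.
- by rewrite lt_bc.
- by rewrite eqxx (ltn_trans lt_ab lt_bc) orbT.
Qed.

Lemma wlt_total w i j : i != j -> wlt w i j = ~~ wlt w j i.
Proof.
move=> ne_ij; rewrite /wlt eq_sym; case: ltgtP => //= _.
by rewrite -leqNgt [RHS]leq_eqVlt -[_ == _]/(i == j) (negbTE ne_ij).
Qed.

Lemma wlt_le w i j : wlt w j i -> w j <= w i.
Proof. by case/orP => [/ltW //|/andP[/eqP-> _]]. Qed.

Definition wrank w i := #|[pred j | wlt w j i]|.

Lemma wrank_lt w i : (wrank w i < N)%N.
Proof.
have sub : [pred j | wlt w j i] \subset predC1 i.
  by apply/subsetP => j; rewrite !inE; apply: contraTneq => ->; rewrite wlt_irr.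
apply: leq_ltn_trans (subset_leq_card sub) _.
by rewrite cardC1 card_ord ltn_predL (leq_ltn_trans _ (ltn_ord i)).
Qed.

Lemma wrank_lt_wlt w i j : wlt w i j -> (wrank w i < wrank w j)%N.
Proof.
move=> lt_ij; apply/proper_card/properP; split.
  by apply/subsetP => k; rewrite !inE => /wlt_trans; apply.
by exists i; rewrite !inE ?wlt_irr.
Qed.

Lemma wrank_inj w : injective (fun i => Ordinal (wrank_lt w i)).
Proof.
move=> i j /(congr1 val) /= eq_ij; apply/eqP/negPn/negP => ne_ij.
have /orP[] : wlt w j i || wlt w i j by rewrite (wlt_total w ne_ij) orbN.
all: by move/wrank_lt_wlt; rewrite eq_ij ltnn.
Qed.

Lemma ismax_rearr w : ismax (fun s : 'S_N => \sum_i w i * (s i)%:R) (rearr w).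
Proof.
split=> [s|]; first exact: sum_perm_le_rearr.
exists (perm (@wrank_inj w)); rewrite -(sum_count_rearr (@wlt_irr w) (@wlt_total w)).
  by apply: eq_bigr => i _; rewrite permE.
exact: wlt_le.
Qed.

End Rearrangement.

Section Levels.
Variable R : realFieldType.
Implicit Types (b eta : R) (k : int).

Definition level b eta (D : R) := b * D ^+ 2 / 2 + eta * D / 2.

Lemma int_cases k : k = 0 \/ 1 <= k%:~R :> R \/ k%:~R <= -1 :> R.
Proof.
case: (ltgtP k 0) => lt_k; [right; right | right; left | by left].
- have : k <= -1 by lia.
  by rewrite -(ler_int R).
- have : 1 <= k by lia.
  by rewrite -(ler_int R).
Qed.

Lemma level_parity_min b eta (D0 k : int) : 0 <= b -> 0 <= eta <= 2 * b ->
  D0 = 0 \/ D0 = -1 -> level b eta D0%:~R <= level b eta (D0 + 2 * k)%:~R.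
Proof.
move=> b_ge0 /andP[eta_ge0 eta_le] D0E; rewrite /level intrD intrM /=.
case: (int_cases k) => [->|[k_bound|k_bound]]; first by rewrite mulr0 addr0.
all: set K := k%:~R in k_bound *; case: D0E => -> /=.
- have : 0 <= K * (2 * b * K + eta) by apply: mulr_ge0; nra.
  nra.
- have : 0 <= K * (2 * b * (K - 1) + eta) by apply: mulr_ge0; nra.
  nra.
- have : 0 <= K * (2 * b * K + eta) by apply: mulr_le0; nra.
  nra.
- have : 0 <= K * (2 * b * (K - 1) + eta) by apply: mulr_le0; nra.
  nra.
Qed.

Lemma level_parity_min_diff b be ga (D0 k : int) : 0 <= be <= b -> 0 <= ga <= b ->
  D0 = 0 \/ D0 = -1 -> level b (be + ga) D0%:~R <= level b (ga - be) (D0 + 2 * k)%:~R.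
Proof.
move=> /andP[be_ge0 be_le] /andP[ga_ge0 ga_le] D0E; rewrite /level intrD intrM /=.
case: (int_cases k) => [->|[k_bound|k_bound]].
  by rewrite mulr0 addr0; case: D0E => -> /=; nra.
all: set K := k%:~R in k_bound *; case: D0E => -> /=.
- have : 0 <= K * (2 * b * K + ga - be) by apply: mulr_ge0; nra.
  nra.
- have : 0 <= (K - 1) * (2 * b * K - be) by apply: mulr_ge0; nra.
  have : 0 <= ga * K by apply: mulr_ge0; nra.
  nra.
- have : 0 <= K * (2 * b * K + ga - be) by apply: mulr_le0; nra.
  nra.
- have : 0 <= K * (2 * b * (K - 1) + ga) by apply: mulr_le0; nra.
  have : 0 <= be * (1 - K) by apply: mulr_ge0; nra.
  nra.
Qed.

Lemma level_add2 b eta D : level b (eta - 4 * b) (D + 2) = level b eta D + (eta - 2 * b).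
Proof. by rewrite /level; field. Qed.

Lemma level_parity_min_shift b eta (D0 k : int) : 0 <= b -> 0 <= eta <= 2 * b ->
  D0 = 0 \/ D0 = -1 ->
  level b eta D0%:~R + (eta - 2 * b) <= level b (eta - 4 * b) (D0 + 2 * k)%:~R.
Proof.
move=> b_ge0 eta_bounds D0E.
have -> : (D0 + 2 * k)%:~R = (D0 + 2 * (k - 1))%:~R + 2 :> R.
  by rewrite !intrD !intrM intrB /=; ring.
by rewrite level_add2 lerD2r level_parity_min.
Qed.

End Levels.

Definition bsgn {R : ringType} (b : bool) : R := if b then 1 else -1.

Section SortedLists.
Variables (R : realFieldType) (T : eqType) (a : T -> R).
Implicit Types (g h : R -> R) (t : R) (l : seq T) (s : T -> bool).

Definition ssum l s : int := \sum_(i <- l) bsgn (s i).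

Definition list_form g t l s :=
  (\sum_(i <- l) \sum_(j <- l) bsgn (s i) * bsgn (s j) * Num.min (a i) (a j)
     - t * (ssum l s)%:~R ^+ 2) / 2
  + (\sum_(i <- l) g (a i) * bsgn (s i) - g t * (ssum l s)%:~R) / 2.

(* Abel summation along the increasing values [a z]: [D] is the signed count of
   the suffix starting at [z]. *)
Fixpoint level_sum g t l s :=
  if l is z :: l' then
    level (a z - t) (g (a z) - g t) (ssum l s)%:~R + level_sum g (a z) l' s
  else 0.

Fixpoint alternating l s : Prop :=
  if l is _ :: l' then (ssum l s = 0 \/ ssum l s = -1) /\ alternating l' s else True.

Fixpoint suffix_shift2 l s s' : Prop :=
  if l is _ :: l' then
    (ssum l s')%:~R = (ssum l s)%:~R + 2 :> R /\ suffix_shift2 l' s s'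
  else True.

Lemma ssum_cons z l s : ssum (z :: l) s = bsgn (s z) + ssum l s.
Proof. by rewrite /ssum big_cons. Qed.

Lemma ssumr_cons z l s : (ssum (z :: l) s)%:~R = bsgn (s z) + (ssum l s)%:~R :> R.
Proof. by rewrite ssum_cons intrD /bsgn; case: (s z). Qed.

Lemma list_form_level_sum g t l s :
  path <=%R t (map a l) -> list_form g t l s = level_sum g t l s.
Proof.
elim: l t => [|z l IH] t /=.
  by move=> _; rewrite /list_form /ssum !big_nil /=; field.
move=> /andP[le_tz sorted_l]; rewrite -(IH _ sorted_l).
have min_z j : j \in l -> a z <= a j.
  move=> lj; have /allP := order_path_min le_trans sorted_l.
  by apply; apply: map_f.
have cross_z : \sum_(j <- l) bsgn (s z) * bsgn (s j) * Num.min (a z) (a j)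
               = bsgn (s z) * a z * (ssum l s)%:~R.
  rewrite /ssum rmorph_sum /= mulr_sumr; apply: eq_big_seq => j lj.
  by rewrite (min_l (min_z j lj)) /bsgn; case: (s j) => /=; ring.
have cross_z' : \sum_(i <- l) bsgn (s i) * bsgn (s z) * Num.min (a i) (a z)
               = bsgn (s z) * a z * (ssum l s)%:~R.
  rewrite -cross_z; apply: eq_big_seq => j lj.
  by rewrite minC [_ * bsgn (s z)]mulrC.
rewrite /list_form big_cons big_cons (eq_bigr _ (fun i _ => big_cons _ _ _ _ _ _)).
rewrite big_split /= cross_z cross_z' minxx big_cons ssumr_cons /level /bsgn.
by case: (s z); field.
Qed.

Lemma ssum_parity l s s' : exists k : int, ssum l s = ssum l s' + 2 * k.
Proof.
elim: l => [|z l [k IH]]; first by exists 0; rewrite /ssum !big_nil.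
rewrite !ssum_cons IH /bsgn.
by case: (s z); case: (s' z); [exists k | exists (k + 1) | exists (k - 1) | exists k]; lia.
Qed.

Lemma eq_in_ssum l s s' : {in l, s =1 s'} -> ssum l s = ssum l s'.
Proof. by move=> eq_ss'; apply: eq_big_seq => i li; rewrite eq_ss'. Qed.

Lemma eq_in_alternating l s s' : {in l, s =1 s'} -> alternating l s -> alternating l s'.
Proof.
elim: l => [//|z l IH] eq_ss' /= [alt_z alt_l]; split; first by rewrite -(eq_in_ssum eq_ss').
by apply: IH alt_l => i li; apply: eq_ss'; rewrite inE li orbT.
Qed.

Lemma alternating_ssum l s : alternating l s -> ssum l s = 0 \/ ssum l s = -1.
Proof. by case: l => [_|z l [] //]; left; rewrite /ssum big_nil. Qed.

Lemma alternating_exists l : uniq l -> exists s, alternating l s.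
Proof.
elim: l => [|z l IH]; first by exists xpredT.
move=> /= /andP[zNl uniq_l]; have [s alt_s] := IH uniq_l.
pose s' i := if i == z then ssum l s == -1 else s i.
have eq_l : {in l, s =1 s'}.
  by move=> i li; rewrite /s'; case: eqP => // iz; rewrite -iz li in zNl.
exists s'; split; last exact: eq_in_alternating alt_s.
rewrite ssum_cons -(eq_in_ssum eq_l) /s' eqxx /bsgn.
by case: (alternating_ssum alt_s) => ->; [right | left].
Qed.

Lemma level_sum_le g1 g2 h :
  (forall u t (D0 k : int), t <= u -> D0 = 0 \/ D0 = -1 ->
     level (u - t) (g2 u - g2 t) D0%:~R + (h u - h t)
       <= level (u - t) (g1 u - g1 t) (D0 + 2 * k)%:~R) ->
  forall l t s s0, path <=%R t (map a l) -> alternating l s0 ->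
  level_sum g2 t l s0 + (h (last t (map a l)) - h t) <= level_sum g1 t l s.
Proof.
move=> level_le; elim=> [|z l IH] t s s0 /=; first by rewrite subrr addr0.
move=> /andP[le_tz sorted_l] [alt_z alt_l]; have [k ->] := ssum_parity (z :: l) s s0.
have := level_le (a z) t _ k le_tz alt_z; have := IH (a z) s s0 sorted_l alt_l.
lra.
Qed.

Lemma level_sum_shift2 g1 g2 h :
  (forall u t D, level (u - t) (g2 u - g2 t) (D + 2)
                 = level (u - t) (g1 u - g1 t) D + (h u - h t)) ->
  forall l t s s', suffix_shift2 l s s' ->
  level_sum g2 t l s' = level_sum g1 t l s + (h (last t (map a l)) - h t).
Proof.
move=> level_eq; elim=> [|z l IH] t s s' /=; first by rewrite subrr addr0.
by move=> [-> shift_l]; rewrite (IH _ _ _ shift_l) level_eq; ring.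
Qed.

Lemma ssum_set_true l s z : uniq l -> s z = false ->
  (ssum l (fun i => (i == z) || s i))%:~R = (ssum l s)%:~R + (if z \in l then 2 else 0) :> R.
Proof.
move=> + sz; elim: l => [|x l IH]; first by rewrite /ssum !big_nil addr0.
move=> /= /andP[xNl uniq_l]; rewrite !ssumr_cons IH // inE.
case: eqVneq => [eq_xz|ne_xz] /=; last by rewrite addrA.
by rewrite -eq_xz in sz *; rewrite sz (negbTE xNl) /bsgn; ring.
Qed.

Lemma suffix_shift2_set_last x l s : uniq (x :: l) -> s (last x l) = false ->
  suffix_shift2 (x :: l) s (fun i => (i == last x l) || s i).
Proof.
elim: l x => [|y l IH] x uniq_xl s_last.
  by split => //; rewrite ssum_set_true // inE eqxx.
split; first by rewrite ssum_set_true // mem_last.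
by apply: IH => //; case/andP: uniq_xl.
Qed.

Lemma alternating_last x l s : alternating (x :: l) s -> s (last x l) = false.
Proof.
elim: l x => [|y l IH] x /=; last by move=> [_]; apply: IH.
by rewrite ssum_cons /ssum big_nil addr0 /bsgn; case: (s x) => // -[[/eqP|/eqP]].
Qed.

Lemma path_last t (l : seq R) : path <=%R t l -> t <= last t l /\ {in l, forall x, x <= last t l}.
Proof.
elim: l t => [|y l IH] t /=; first by [].
move=> /andP[le_ty sorted_l]; have [le_y max_l] := IH y sorted_l; split.
  exact: le_trans le_ty le_y.
by move=> x; rewrite inE => /predU1P[->|]; last exact: max_l.
Qed.

End SortedLists.

Section SignForm.
Variables (R : realFieldType) (N : nat) (a : 'I_N -> R).
Implicit Types (I : pred 'I_N) (z : 'I_N -> bool) (g : R -> R).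

Definition sign_form g I z :=
  (\sum_i \sum_j (if I i && I j then bsgn (z i) * bsgn (z j) * Num.min (a i) (a j) else 0)) / 2
  + (\sum_i (if I i then g (a i) * bsgn (z i) else 0)) / 2.

Definition sorted_support I := sort (fun i j => a i <= a j) (filter I (index_enum 'I_N)).

Lemma sum_sorted_support I (F : 'I_N -> R) :
  \sum_i (if I i then F i else 0) = \sum_(i <- sorted_support I) F i.
Proof.
rewrite -big_mkcond -big_filter; apply: perm_big.
by rewrite perm_sym perm_sort perm_refl.
Qed.

Lemma sum2_sorted_support I (F : 'I_N -> 'I_N -> R) :
  \sum_i \sum_j (if I i && I j then F i j else 0)
  = \sum_(i <- sorted_support I) \sum_(j <- sorted_support I) F i j.
Proof.
rewrite -sum_sorted_support; apply: eq_bigr => i _.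
by case: (I i) => /=; rewrite ?sum_sorted_support ?big1_eq.
Qed.

Lemma sorted_support_uniq I : uniq (sorted_support I).
Proof. by rewrite /sorted_support sort_uniq filter_uniq // index_enum_uniq. Qed.

Lemma mem_sorted_support I i : (i \in sorted_support I) = I i.
Proof. by rewrite mem_sort mem_filter mem_index_enum andbT. Qed.

Hypothesis a_ge0 : forall i, 0 <= a i.

Lemma sorted_support_path I : path <=%R 0 (map a (sorted_support I)).
Proof.
rewrite path_sortedE; last exact: le_trans.
apply/andP; split; first by apply/allP => x /mapP[i _ ->].
by rewrite sorted_map; apply: sort_sorted => i j; exact: le_total.
Qed.

Lemma sign_form_level_sum g I z :
  g 0 = 0 -> sign_form g I z = level_sum a g 0 (sorted_support I) z.
Proof.
move=> g0; rewrite -list_form_level_sum ?sorted_support_path //.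
by rewrite /sign_form /list_form sum_sorted_support sum2_sorted_support g0; ring.
Qed.

Definition split_energy (w : R -> R) I (x : 'I_N -> R) :=
  \sum_i ((\sum_j (if I i && I j then `|x i - x j| else 0)) / 2 + (if I i then w (x i) else 0)).

Lemma eq_split_energy (w : R -> R) I I' (x x' : 'I_N -> R) :
  I =1 I' -> {in I, x =1 x'} -> split_energy w I x = split_energy w I' x'.
Proof.
move=> eq_I eq_x; apply: eq_bigr => i _; rewrite -!eq_I.
case Ii: (I i) => //=; rewrite eq_x //; congr (_ / 2 + _).
by apply: eq_bigr => j _; rewrite -eq_I; case Ij: (I j); rewrite //= !eq_x.
Qed.

Definition split_const (F : R -> R) I :=
  (\sum_i \sum_j (if I i && I j then a i + a j - Num.min (a i) (a j) else 0)) / 2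
  + (\sum_i (if I i then F (a i) else 0)) / 2.

Lemma norm_bsgn_sub (b1 b2 : bool) (x y : R) : 0 <= x -> 0 <= y ->
  `|bsgn b1 * x - bsgn b2 * y| = x + y - Num.min x y - bsgn b1 * bsgn b2 * Num.min x y.
Proof.
move=> x_ge0 y_ge0; rewrite /bsgn; case: b1; case: b2.
all: rewrite ?mul1r ?mulN1r ?mulrNN ?mulr1 ?opprK.
- by rewrite minr_absE; lra.
- by rewrite ger0_norm ?addr_ge0 //; lra.
- by rewrite -opprD normrN ger0_norm ?addr_ge0 //; lra.
- by rewrite addrC distrC minr_absE; lra.
Qed.

Lemma split_energy_sign (w g F : R -> R) I z :
  (forall x, 0 <= x -> w x = F x / 2 - g x / 2 /\ w (- x) = F x / 2 + g x / 2) ->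
  split_energy w I (fun i => bsgn (z i) * a i) = split_const F I - sign_form g I z.
Proof.
move=> w_pm; rewrite /split_const /sign_form !mulr_suml -!big_split -sumrB.
apply: eq_bigr => i _.
have -> : \sum_j (if I i && I j then `|bsgn (z i) * a i - bsgn (z j) * a j| else 0) =
    \sum_j (if I i && I j then a i + a j - Num.min (a i) (a j) else 0)
    - \sum_j (if I i && I j then bsgn (z i) * bsgn (z j) * Num.min (a i) (a j) else 0).
  rewrite -sumrB; apply: eq_bigr => j _; case: (I i && I j); last by rewrite subr0.
  by rewrite norm_bsgn_sub.
case: (I i) => /=; last by rewrite !big1_eq; lra.
have [w_pos w_neg] := w_pm _ (a_ge0 i).
by rewrite /bsgn; case: (z i); rewrite ?mul1r ?mulN1r ?w_pos ?w_neg; lra.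
Qed.

End SignForm.

Definition hinge (R : numDomainType) (e x : R) := Num.max 0 (x - e).

Lemma hinge_diff (R : realDomainType) (e t u : R) :
  t <= u -> 0 <= hinge e u - hinge e t <= u - t.
Proof.
move=> le_tu; rewrite /hinge.
by case: (lerP 0 (u - e)) => ?; case: (lerP 0 (t - e)) => ?; apply/andP; split; lra.
Qed.

Lemma hinge_eq0 (R : realDomainType) (e x : R) : x <= e -> hinge e x = 0.
Proof. by move=> le_xe; rewrite /hinge max_l // subr_le0. Qed.

Lemma hinge_id (R : realDomainType) (e x : R) : e <= x -> hinge e x = x - e.
Proof. by move=> le_ex; rewrite /hinge max_r // subr_ge0. Qed.

Lemma hinge_oppr_eq0 (R : realDomainType) (e x : R) : 0 < e -> 0 <= x -> hinge e (- x) = 0.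
Proof. by move=> e_gt0 x_ge0; apply: hinge_eq0; rewrite (le_trans _ (ltW e_gt0)) ?oppr_le0. Qed.

Lemma hinge_ge (R : realDomainType) (e x : R) : x - e <= hinge e x.
Proof. by rewrite /hinge le_max lexx orbT. Qed.

Section Balance.
Variables (R : realFieldType) (N : nat) (delta eps : R) (a : 'I_N -> R) (I : pred 'I_N).
Hypotheses (delta_gt0 : 0 < delta) (eps_gt0 : 0 < eps) (a_ge0 : forall i, 0 <= a i).

Definition weightX (x : R) := hinge eps x + hinge delta x.
Definition weightY (x : R) := hinge delta x - hinge eps x.
Definition weightZ (x : R) := weightX x - 4 * x.

Local Notation formX := (sign_form a weightX I).
Local Notation formY := (sign_form a weightY I).
Local Notation formZ := (sign_form a weightZ I).
Local Notation L := (sorted_support a I).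

Lemma weight0 : [/\ weightX 0 = 0, weightY 0 = 0 & weightZ 0 = 0].
Proof.
have hinge0 (e : R) : 0 < e -> hinge e 0 = 0 by move=> e_gt0; rewrite hinge_eq0 // ltW.
by rewrite /weightZ /weightY /weightX !hinge0 // !addr0 subrr mulr0 subrr.
Qed.

Lemma weightX_diff t u : t <= u ->
  0 <= hinge eps u - hinge eps t <= u - t /\ 0 <= hinge delta u - hinge delta t <= u - t.
Proof. by move=> le_tu; split; apply: hinge_diff. Qed.

Variable s0 : 'I_N -> bool.
Hypothesis alt_s0 : alternating L s0.

Lemma formX_min z : formX s0 <= formX z.
Proof.
have [X0 _ _] := weight0; rewrite !sign_form_level_sum //.
have := @level_sum_le _ _ a weightX weightX (fun=> 0) _ L 0 z s0 (sorted_support_path a_ge0 I) alt_s0.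
rewrite subrr addr0; apply=> u t D0 k le_tu D0E; rewrite addr0.
have [/andP[? ?] /andP[? ?]] := weightX_diff le_tu.
by apply: level_parity_min => //; rewrite ?subr_ge0 // /weightX; apply/andP; split; lra.
Qed.

Lemma formX_le_Y z : formX s0 <= formY z.
Proof.
have [X0 Y0 _] := weight0; rewrite !sign_form_level_sum //.
have := @level_sum_le _ _ a weightY weightX (fun=> 0) _ L 0 z s0 (sorted_support_path a_ge0 I) alt_s0.
rewrite subrr addr0; apply=> u t D0 k le_tu D0E; rewrite addr0.
have [eps_bounds delta_bounds] := weightX_diff le_tu.
have -> : weightX u - weightX t = (hinge eps u - hinge eps t) + (hinge delta u - hinge delta t).
  by rewrite /weightX; ring.
have -> : weightY u - weightY t = (hinge delta u - hinge delta t) - (hinge eps u - hinge eps t).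
  by rewrite /weightY; ring.
exact: level_parity_min_diff.
Qed.

Lemma formX_le_Z z : formX s0 <= formZ z + delta + eps.
Proof.
have [X0 _ Z0] := weight0; rewrite !sign_form_level_sum //.
pose h x := weightX x - 2 * x.
suff : level_sum a weightX 0 L s0 + (h (last 0 (map a L)) - h 0) <= level_sum a weightZ 0 L z.
  rewrite /h X0 mulr0 subr0; set M := last 0 _.
  by have := hinge_ge eps M; have := hinge_ge delta M; rewrite /weightX; lra.
apply: (@level_sum_le _ _ a weightZ weightX h _ L 0 z s0 (sorted_support_path a_ge0 I) alt_s0).
move=> u t D0 k le_tu D0E; have [/andP[? ?] /andP[? ?]] := weightX_diff le_tu.
have -> : h u - h t = (weightX u - weightX t) - 2 * (u - t) by rewrite /h; ring.
have -> : weightZ u - weightZ t = (weightX u - weightX t) - 4 * (u - t).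
  by rewrite /weightZ; ring.
by apply: level_parity_min_shift => //; rewrite ?subr_ge0 // /weightX; apply/andP; split; lra.
Qed.

Lemma formX_attained : exists z, Num.min (formY z) (formZ z + delta + eps) <= formX s0.
Proof.
have [X0 _ Z0] := weight0.
case: (boolP [forall i, I i ==> (a i <= eps)]) => [/forallP small_eps|].
  exists s0; rewrite ge_min; apply/orP; left; rewrite le_eqVlt; apply/orP; left.
  apply/eqP; congr (_ + _ / 2); apply: eq_bigr => i _; case Ii: (I i) => //.
  have := small_eps i; rewrite Ii => /hinge_eq0 eps0.
  by rewrite /weightY /weightX eps0 subr0 add0r.
case: (boolP [forall i, I i ==> (a i <= delta)]) => [/forallP small_delta _|].
  exists (fun i => ~~ s0 i); rewrite ge_min; apply/orP; left; rewrite le_eqVlt; apply/orP; left.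
  apply/eqP; congr (_ / 2 + _ / 2); apply: eq_bigr => i _.
    by apply: eq_bigr => j _; case: (I i && I j) => //; rewrite /bsgn; case: (s0 i); case: (s0 j) => /=; ring.
  case Ii: (I i) => //; have := small_delta i; rewrite Ii => /hinge_eq0 delta0.
  by rewrite /weightY /weightX delta0 /bsgn; case: (s0 i) => /=; ring.
move=> /forallPn[j]; rewrite negb_imply -ltNge => /andP[Ij lt_delta_j].
move=> /forallPn[i]; rewrite negb_imply -ltNge => /andP[Ii lt_eps_i].
pose h x := weightX x - 2 * x.
have level_eq u t D : level (u - t) (weightZ u - weightZ t) (D + 2)
                      = level (u - t) (weightX u - weightX t) D + (h u - h t).
  have -> : weightZ u - weightZ t = (weightX u - weightX t) - 4 * (u - t).
    by rewrite /weightZ; ring.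
  by rewrite level_add2 /h; congr (_ + _); ring.
case E: (sorted_support a I) => [|x l].
  by move: Ii; rewrite -(mem_sorted_support a) E.
have := alt_s0; have := sorted_support_uniq a I; have := sorted_support_path a_ge0 I.
rewrite E => path_L uniq_L alt_L.
exists (fun k => (k == last x l) || s0 k); rewrite ge_min; apply/orP; right.
rewrite !sign_form_level_sum // E.
rewrite (level_sum_shift2 a level_eq 0 (suffix_shift2_set_last R uniq_L (alternating_last alt_L))).
have [_ max_L] := path_last path_L; set M := last 0 _ in max_L *.
have le_aM k : I k -> a k <= M by rewrite -(mem_sorted_support a) E => Lk; apply/max_L/map_f.
have := le_aM i Ii; have := le_aM j Ij => le_jM le_iM.
by rewrite /h X0 mulr0 subr0 /weightX !hinge_id; lra.
Qed.

End Balance.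

Lemma sign_form_balance (R : realFieldType) N (delta eps : R) (a : 'I_N -> R) I :
  0 < delta -> 0 < eps -> (forall i, 0 <= a i) ->
  exists v, ismin (sign_form a (weightX delta eps) I) v
         /\ ismin (fun z => Num.min (sign_form a (weightY delta eps) I z)
                                    (sign_form a (weightZ delta eps) I z + delta + eps)) v.
Proof.
move=> delta_gt0 eps_gt0 a_ge0.
have [s0 alt_s0] := alternating_exists (sorted_support_uniq a I).
exists (sign_form a (weightX delta eps) I s0); split.
  by split; [exact: formX_min | exists s0].
split=> [z|]; first by rewrite le_min formX_le_Y ?formX_le_Z.
have [z le_z] := formX_attained delta_gt0 eps_gt0 a_ge0 alt_s0.
by exists z; apply/le_anti; rewrite le_z le_min formX_le_Y ?formX_le_Z.
Qed.

Lemma max_addN (R : realFieldType) (x y : R) :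
  Num.max x y + Num.max (- x) (- y) = `|x - y|.
Proof.
rewrite !maxr_absE; have -> : `|- x - - y| = `|x - y| by rewrite -opprD normrN.
lra.
Qed.

Section TauExpansion.
Variables (R : realFieldType) (N : nat) (delta eps : R) (r c c' : 'I_N -> R).
Implicit Types (l m n : int) (f s t : {ffun 'I_N -> bool}).

Definition slope i (b : bool) := if b then r i else - r i.
Definition offset i (b : bool) := if b then c i else c' i.
Definition slopes (f : 'I_N -> bool) i := slope i (f i).

Definition branch l m n i b :=
  hinge delta (slope i b) * l%:~R - hinge eps (- slope i b) * m%:~R
  + slope i b * n%:~R + offset i b.

Definition tau_sum l m n f := \sum_i branch l m n i (f i) + rearr (slopes f).

Lemma phi_branchE l m n i :
  phi delta eps (r i) (c i) (c' i) l m n = Num.max (branch l m n i true) (branch l m n i false).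
Proof. by rewrite /phi /eta_ /eta' /branch /hinge /slope /offset /= opprK mulNr. Qed.

Lemma branch_shiftn l m n i b (k : nat) :
  branch l m (n + k%:Z) i b = branch l m n i b + slope i b * k%:R.
Proof. by rewrite /branch intrD /=; ring. Qed.

(* Both the permutation and the choice of branch in every [phi] are maximized
   over; the permutation is then eliminated by the rearrangement inequality. *)
Lemma ismax_tau l m n : ismax (tau_sum l m n) (tau delta eps r c c' l m n).
Proof.
pose F (p : 'S_N) (f : {ffun 'I_N -> bool}) := \sum_i branch l m (n + (p i : nat)%:Z) i (f i).
have max_F : ismax (fun q => F q.1 q.2) (tau delta eps r c c' l m n).
  apply: (ismax_prod _ (ismax_UP _)) => p.
  have := ismax_sum_max (fun i => branch l m (n + (p i : nat)%:Z) i true)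
                        (fun i => branch l m (n + (p i : nat)%:Z) i false).
  rewrite (eq_bigr _ (fun i _ => esym (phi_branchE _ _ _ i))).
  by apply: eq_ismax => f; apply: eq_bigr => i _; case: (f i).
apply: ismax_prod_inv max_F => f.
apply: eq_ismax (ismax_addl _ (ismax_rearr (slopes f))) => p.
by rewrite /F (eq_bigr _ (fun i _ => branch_shiftn l m n i (f i) (p i))) [RHS]big_split.
Qed.

Definition differ (s t : 'I_N -> bool) i := s i != t i.

Lemma slope_differ (s t : 'I_N -> bool) i :
  differ s t i -> slope i (t i) = - slope i (s i).
Proof. by rewrite /differ /slope; case: (s i); case: (t i); rewrite ?opprK. Qed.

Lemma agree_eq (s t : 'I_N -> bool) i : ~~ differ s t i -> t i = s i.
Proof. by rewrite /differ negbK => /eqP. Qed.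

Definition swap_of (s t s' t' : 'I_N -> bool) :=
  forall i, (s' i = s i /\ t' i = t i) \/ (s' i = t i /\ t' i = s i).

Lemma differ_swap s t s' t' : swap_of s t s' t' -> differ s' t' =1 differ s t.
Proof. by move=> sw i; rewrite /differ; case: (sw i) => -[-> ->] //; rewrite eq_sym. Qed.

(* Sign vectors [z] are encoded relative to the sign of [r i], so that the slope
   of the chosen branch is [bsgn (z i) * |r i|] (also when [r i = 0]). *)
Definition orient (z : 'I_N -> bool) i := if 0 <= r i then z i else ~~ z i.

Lemma orientK z : orient (orient z) =1 z.
Proof. by move=> i; rewrite /orient; case: (0 <= r i); rewrite ?negbK. Qed.

Lemma slope_orient z i : slope i (orient z i) = bsgn (z i) * `|r i|.
Proof.
rewrite /slope /orient /bsgn.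
case: (lerP 0 (r i)) => [/ger0_norm->|/ltr0_norm->]; case: (z i) => /=.
all: by rewrite ?mul1r ?mulN1r ?opprK.
Qed.

Definition reflip (s t : 'I_N -> bool) z : {ffun 'I_N -> bool} * {ffun 'I_N -> bool} :=
  ([ffun i => if differ s t i then orient z i else s i],
   [ffun i => if differ s t i then ~~ orient z i else t i]).

Lemma reflip_swap s t z : swap_of s t (reflip s t z).1 (reflip s t z).2.
Proof.
move=> i; rewrite !ffunE /differ.
by case: (s i); case: (t i); case: (orient z i) => /=; by [left | right].
Qed.

Lemma reflip_orient (s t : {ffun 'I_N -> bool}) : reflip s t (orient s) = (s, t).
Proof.
by congr pair; apply/ffunP => i; rewrite !ffunE orientK /differ; case: (s i); case: (t i).
Qed.

Lemma slopes_reflip s t z i : differ s t i -> slopes (reflip s t z).1 i = bsgn (z i) * `|r i|.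
Proof. by move=> d_i; rewrite /slopes ffunE d_i slope_orient. Qed.

Section PairSums.
Variables l m n : int.

(* The part of a sum of two [tau_sum]s, centred at [(l, m, n)], that is invariant
   under exchanging [s i] and [t i] at indices where they differ. *)
Definition pair_rest (s t : 'I_N -> bool) :=
  \sum_i (branch l m n i (s i) + branch l m n i (t i) - (slopes s i + slopes t i) / 2
    + (if differ s t i then 0 else hinge eps (- slopes s i) + hinge delta (slopes s i))
    + (\sum_j (if differ s t i && differ s t j then 0
               else Num.max (slopes s i) (slopes s j) + Num.max (slopes t i) (slopes t j))) / 2).

Lemma pair_decomp (l1 m1 n1 l2 m2 n2 : int) (e1 e2 : R -> R) s t :
  (forall i b, branch l1 m1 n1 i b = branch l m n i b + e1 (slope i b)) ->
  (forall i b, branch l2 m2 n2 i b = branch l m n i b + e2 (slope i b)) ->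
  (forall x, e1 x + e2 x = hinge eps (- x) + hinge delta x) ->
  tau_sum l1 m1 n1 s + tau_sum l2 m2 n2 t =
  pair_rest s t + split_energy (fun x => e1 x + e2 (- x)) (differ s t) (slopes s).
Proof.
move=> shift1 shift2 e12; rewrite /tau_sum /rearr.
rewrite (eq_bigr _ (fun i _ => shift1 i (s i))) (eq_bigr _ (fun i _ => shift2 i (t i))).
rewrite /pair_rest /split_energy -!big_split /=; apply: eq_bigr => i _.
set A := \sum_j _; set B := \sum_j _; set C := \sum_j _; set D := \sum_j _.
have sum_AB : A + B = C + D.
  rewrite /A /B /C /D -!big_split /=; apply: eq_bigr => j _.
  case: ifP => [/andP[d_i d_j]|_]; last by rewrite addr0.
  by rewrite /slopes (slope_differ d_i) (slope_differ d_j) max_addN add0r.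
rewrite /slopes; case: (boolP (differ s t i)) => [d_i|/agree_eq ->].
- by rewrite (slope_differ d_i); lra.
- by have := e12 (slope i (s i)); lra.
Qed.

Lemma pair_rest_swap s t s' t' : swap_of s t s' t' -> pair_rest s' t' = pair_rest s t.
Proof.
move=> sw; have d_sw := differ_swap sw; rewrite /pair_rest /slopes.
apply: eq_bigr => i _; rewrite !d_sw; congr (_ + _ / 2).
  case: (sw i) => -[-> ->] //; case: (boolP (differ s t i)) => [_|/agree_eq-> //].
  by lra.
apply: eq_bigr => j _; rewrite !d_sw; case: (boolP (differ s t i && differ s t j)) => // agree.
have [/agree_eq e|/agree_eq e] : ~~ differ s t i \/ ~~ differ s t j.
  by move: agree; rewrite negb_and => /orP.
all: by case: (sw i) => -[-> ->]; case: (sw j) => -[-> ->]; rewrite ?e // addrC.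
Qed.

Definition pair_base s t :=
  pair_rest s t + split_const (fun i => `|r i|) (weightX delta eps) (differ s t).

Lemma pair_sum_reflip (l1 m1 n1 l2 m2 n2 : int) (e1 e2 g : R -> R) s t z :
  (forall i b, branch l1 m1 n1 i b = branch l m n i b + e1 (slope i b)) ->
  (forall i b, branch l2 m2 n2 i b = branch l m n i b + e2 (slope i b)) ->
  (forall x, e1 x + e2 x = hinge eps (- x) + hinge delta x) ->
  (forall x, 0 <= x -> e1 x + e2 (- x) = weightX delta eps x / 2 - g x / 2
                    /\ e1 (- x) + e2 x = weightX delta eps x / 2 + g x / 2) ->
  tau_sum l1 m1 n1 (reflip s t z).1 + tau_sum l2 m2 n2 (reflip s t z).2 =
  pair_base s t - sign_form (fun i => `|r i|) g (differ s t) z.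
Proof.
move=> shift1 shift2 e12 e_pm; rewrite (pair_decomp _ _ shift1 shift2 e12).
rewrite (pair_rest_swap (reflip_swap s t z)) /pair_base -addrA; congr (_ + _).
rewrite (@eq_split_energy _ _ _ _ (differ s t) _ (fun i => bsgn (z i) * `|r i|)).
- apply: split_energy_sign => [i|x x_ge0]; first exact: normr_ge0.
  by rewrite opprK; apply: e_pm.
- exact: differ_swap (reflip_swap s t z).
- by move=> i d_i; apply: slopes_reflip; rewrite -(differ_swap (reflip_swap s t z)).
Qed.

Local Notation penalty g s t z := (sign_form (fun i => `|r i|) g (differ s t) z).

Lemma pairX_reflip s t z : 0 < delta -> 0 < eps ->
  tau_sum l (m - 1) n (reflip s t z).1 + tau_sum (l + 1) m n (reflip s t z).2
  = pair_base s t - penalty (weightX delta eps) s t z.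
Proof.
move=> delta_gt0 eps_gt0.
apply: (pair_sum_reflip (e1 := fun x => hinge eps (- x)) (e2 := hinge delta)) => // [i b|i b|x x_ge0].
- by rewrite /branch intrB /=; ring.
- by rewrite /branch intrD /=; ring.
- by rewrite /weightX opprK !hinge_oppr_eq0 //; split; lra.
Qed.

Lemma pairY_reflip s t z : 0 < delta -> 0 < eps ->
  tau_sum l m n (reflip s t z).1 + tau_sum (l + 1) (m - 1) n (reflip s t z).2
  = pair_base s t - penalty (weightY delta eps) s t z.
Proof.
move=> delta_gt0 eps_gt0.
apply: (pair_sum_reflip (e1 := fun=> 0) (e2 := fun x => hinge delta x + hinge eps (- x)))
  => [i b|i b|x|x x_ge0].
- by rewrite addr0.
- by rewrite /branch intrB intrD /=; ring.
- by rewrite add0r addrC.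
- by rewrite /weightX /weightY opprK !hinge_oppr_eq0 //; split; lra.
Qed.

Lemma pairZ_reflip s t z : 0 < delta -> 0 < eps ->
  tau_sum l (m - 1) (n + 1) (reflip s t z).1 + tau_sum (l + 1) m (n - 1) (reflip s t z).2
  = pair_base s t - penalty (weightZ delta eps) s t z.
Proof.
move=> delta_gt0 eps_gt0.
apply: (pair_sum_reflip (e1 := fun x => hinge eps (- x) + x) (e2 := fun x => hinge delta x - x))
  => [i b|i b|x|x x_ge0].
- by rewrite /branch intrB intrD /=; ring.
- by rewrite /branch intrB intrD /=; ring.
- by ring.
- by rewrite /weightZ /weightX opprK !hinge_oppr_eq0 //; split; lra.
Qed.

End PairSums.
End TauExpansion.

Theorem theorem3 (R : realFieldType) (N : nat) (hN : (1 <= N)%N)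
  (delta eps : R) (hdelta : 0 < delta) (heps : 0 < eps)
  (r c c' : 'I_N -> R) (l m n : int) :
  tau delta eps r c c' l (m - 1) n + tau delta eps r c c' (l + 1) m n =
  Num.max (tau delta eps r c c' l m n + tau delta eps r c c' (l + 1) (m - 1) n)
          (tau delta eps r c c' l (m - 1) (n + 1)
           + tau delta eps r c c' (l + 1) m (n - 1) - delta - eps).
Proof.
pose D (p : {ffun 'I_N -> bool} * {ffun 'I_N -> bool}) := differ p.1 p.2.
pose penalty g p := sign_form (fun i => `|r i|) g (D p).
have max_tau := ismax_tau delta eps r c c'.
apply: (ismax_balance (flip := fun p => reflip r p.1 p.2) (sgn := fun p => orient r p.1)
          (Rst := fun p => pair_base delta eps r c c' l m n p.1 p.2)
          (PX := penalty (weightX delta eps)) (PY := penalty (weightY delta eps))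
          (PZ := fun p u => penalty (weightZ delta eps) p u + delta + eps))
       _ _ _ _ _ (ismax_add (max_tau _ _ _) (max_tau _ _ _))
       (ismax_add (max_tau _ _ _) (max_tau _ _ _))
       (ismax_addr _ (ismax_addr _ (ismax_add (max_tau _ _ _) (max_tau _ _ _)))).
- by move=> [s t]; apply: reflip_orient.
- by move=> p u; apply: pairX_reflip.
- by move=> p u; apply: pairY_reflip.
- by move=> p u; rewrite /= pairZ_reflip // /penalty; ring.
- by move=> p; apply: sign_form_balance => // i; apply: normr_ge0.
Qed.
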